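(* Let $K_n$ ($n\ge1$) and $K$ be unconstrained Sierpinski carpets with the same $k,N$, generated by $\{\Psi_{n,i}\}_{i=1}^N$ and $\{\Psi_i\}_{i=1}^N$ respectively. (a) If $\Psi_{n,i}\to\Psi_i$ for each $1\le i\le N$ (in the finite-dimensional linear space of affine maps), then $K_n\to K$ in the Hausdorff metric. (b) Conversely, if $K_n\to K$ in the Hausdorff metric, then after reordering $\{\Psi_{n,i}\}_{i=1}^N$ for each $n$, one has $\Psi_{n,i}\to\Psi_i$ for each $1\le i\le N$.
   Context: USC: integers $k\ge3$, $4(k-1)\le N\le k^2-1$; maps $\Psi_i(x)=x/k+c_i$ on $\square=[0,1]^2$ with pairwise intersections of the $\Psi_i(\square)$ a segment, point or empty, $\bigcup_i\Psi_i(\square)$ connected and invariant under the 8 isometries of $\square$, $[0,1]\times\{0\}\subset\bigcup_i\Psi_i(\square)\subset\square$; $K=\bigcup_i\Psi_iK$. *)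

From HB Require Import structures.
From mathcomp Require Import all_boot all_order all_algebra all_fingroup.
From mathcomp Require Import all_classical all_reals all_analysis.
Set Implicit Arguments. Unset Strict Implicit. Unset Printing Implicit Defensive.
Import Order.TTheory GRing.Theory Num.Theory.
Import numFieldNormedType.Exports.
Local Open Scope classical_set_scope.
Local Open Scope ring_scope.

Section USCDefs.
Variable R : realType.
Notation P := (R * R)%type.

Definition edist2 (p q : P) : R :=
  Num.sqrt ((p.1 - q.1) ^+ 2 + (p.2 - q.2) ^+ 2).

Definition unit_square : set P :=
  [set p | 0 <= p.1 <= 1 /\ 0 <= p.2 <= 1].

Definition bottom_edge : set P := [set p | 0 <= p.1 <= 1 /\ p.2 = 0].

Definition psi (k : nat) (c : P) (p : P) : P :=
  (p.1 / k%:R + c.1, p.2 / k%:R + c.2).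

(* the 8 isometries of the unit square (dihedral group D4) *)
Definition sq_iso (b1 b2 b3 : bool) (p : P) : P :=
  let q := if b3 then (p.2, p.1) else p in
  (if b1 then 1 - q.1 else q.1, if b2 then 1 - q.2 else q.2).

(* closed segment [a,b] (a = b allowed: a point) *)
Definition segment (a b : P) : set P :=
  [set (a.1 + t * (b.1 - a.1), a.2 + t * (b.2 - a.2)) | t in `[0, 1]%classic].

Definition seg_point_or_empty (S : set P) : Prop :=
  S = set0 \/ exists a b, S = segment a b.

Definition level1 (k N : nat) (c : 'I_N -> P) : set P :=
  \bigcup_(i in [set: 'I_N]) (psi k (c i) @` unit_square).

Definition USC (k N : nat) (c : 'I_N -> P) : Prop :=
  [/\ (3 <= k)%N, (4 * (k - 1) <= N)%N & (N <= k ^ 2 - 1)%N] /\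
  (forall i j : 'I_N, i != j ->
     seg_point_or_empty (psi k (c i) @` unit_square `&` psi k (c j) @` unit_square)) /\
  connected (level1 k c) /\
  (forall b1 b2 b3, sq_iso b1 b2 b3 @` level1 k c = level1 k c) /\
  bottom_edge `<=` level1 k c /\ level1 k c `<=` unit_square.

Definition attractor (k N : nat) (c : 'I_N -> P) (K : set P) : Prop :=
  [/\ K !=set0, compact K &
      K = \bigcup_(i in [set: 'I_N]) (psi k (c i) @` K)].

Definition pt_set_dist (x : P) (B : set P) : \bar R :=
  ereal_inf [set (edist2 x y)%:E | y in B].

Definition hausdorff_dist (A B : set P) : \bar R :=
  Order.max (ereal_sup [set pt_set_dist x B | x in A])
            (ereal_sup [set pt_set_dist y A | y in B]).

Definition hausdorff_cvg (Kn : nat -> set P) (K : set P) : Prop :=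
  (fun n => hausdorff_dist (Kn n) K) @ \oo --> 0%E.

End USCDefs.

From HB Require Import structures.
From mathcomp Require Import all_boot all_order all_algebra all_fingroup.
From mathcomp Require Import all_classical all_reals all_analysis.
From mathcomp Require Import ring lra zify.
Import Order.TTheory GRing.Theory Num.Theory.
Import numFieldNormedType.Exports.
Local Open Scope classical_set_scope.
Local Open Scope ring_scope.

(* (a) If every map of one carpet is within [d] of the corresponding map of the other
   and the first attractor lies within [t] of the second, then one self-similarity step
   puts it within [t / k + d]; iterating from [t = 2] bounds the Hausdorff distance by
   [d k / (k - 1)].
   (b) The positions of the carpets lie in the unit square, so along a subsequence they
   converge; the limit family is still 1/k-separated, its cells cover [K], and its maps
   leave [K] invariant.  Two such families for the same [K] coincide: among the
   positions occurring in only one of them take one of minimal coordinate sum; since [K]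
   has points arbitrarily close to the origin inside the square, [K] has points just
   inside the lower left corner of that cell, and these lie in no cell of the other
   family.  Hence each [c i] is eventually approached by a position of the [n]-th carpet;
   as the [c i] are 1/k apart this matching is a permutation, and a permutation
   minimising the total error converges. *)

Section EuclideanDistance.
Variable R : realType.
Set Implicit Arguments. Unset Strict Implicit.
Notation P := (R * R)%type.
Implicit Types (x y z a b : P).

Lemma minkowski2 (a b c d : R) :
  Num.sqrt ((a + b) ^+ 2 + (c + d) ^+ 2) <=
  Num.sqrt (a ^+ 2 + c ^+ 2) + Num.sqrt (b ^+ 2 + d ^+ 2).
Proof.
set u := Num.sqrt (a ^+ 2 + c ^+ 2); set v := Num.sqrt (b ^+ 2 + d ^+ 2).
have [u0 v0] : 0 <= u /\ 0 <= v by split; apply: sqrtr_ge0.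
have u2 : u ^+ 2 = a ^+ 2 + c ^+ 2 by rewrite sqr_sqrtr // addr_ge0 // sqr_ge0.
have v2 : v ^+ 2 = b ^+ 2 + d ^+ 2 by rewrite sqr_sqrtr // addr_ge0 // sqr_ge0.
have cauchy_schwarz : a * b + c * d <= u * v.
  have uv0 : 0 <= u * v by apply: mulr_ge0.
  have [|lt0] := lerP (a * b + c * d) 0; first by move/le_trans; apply.
  have : (a * b + c * d) ^+ 2 <= (u * v) ^+ 2.
    by rewrite exprMn u2 v2; have := sqr_ge0 (a * d - b * c); nra.
  by rewrite ler_pXn2r // nnegrE ltW.
rewrite -[u + v]ger0_norm ?addr_ge0 // -sqrtr_sqr ler_sqrt ?sqr_ge0 //.
by rewrite [(u + v) ^+ 2]sqrrD u2 v2; nra.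
Qed.

Lemma edist2_ge0 x y : 0 <= edist2 x y.
Proof. exact: sqrtr_ge0. Qed.

Lemma edist2C x y : edist2 x y = edist2 y x.
Proof. by rewrite /edist2 -(sqrrN (x.1 - y.1)) -(sqrrN (x.2 - y.2)) !opprB. Qed.

Lemma edist2_triangle x y z : edist2 x z <= edist2 x y + edist2 y z.
Proof.
have split_at (s t u : R) : s - u = (s - t) + (t - u) by ring.
by rewrite /edist2 (split_at x.1 y.1) (split_at x.2 y.2); exact: minkowski2.
Qed.

Lemma edist2_ge_dist1 x y : `|x.1 - y.1| <= edist2 x y.
Proof. by rewrite -sqrtr_sqr ler_sqrt ?addr_ge0 ?sqr_ge0 // lerDl sqr_ge0. Qed.

Lemma edist2_ge_dist2 x y : `|x.2 - y.2| <= edist2 x y.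
Proof. by rewrite -sqrtr_sqr ler_sqrt ?addr_ge0 ?sqr_ge0 // lerDr sqr_ge0. Qed.

Lemma edist2_le_dist_sum x y : edist2 x y <= `|x.1 - y.1| + `|x.2 - y.2|.
Proof.
have := minkowski2 (x.1 - y.1) 0 0 (x.2 - y.2).
by rewrite !addr0 !add0r expr0n /= addr0 add0r !sqrtr_sqr.
Qed.

Lemma edist2_psi (k : nat) a b y z : (0 < k)%N ->
  edist2 (psi k a y) (psi k b z) <= edist2 y z / k%:R + edist2 a b.
Proof.
move=> k0; have kV0 : 0 <= (k%:R : R)^-1 by rewrite invr_ge0 ler0n.
have -> : edist2 y z / k%:R =
    edist2 (y.1 / k%:R, y.2 / k%:R) (z.1 / k%:R, z.2 / k%:R).
  rewrite /edist2 /= -!mulrBl !exprMn -mulrDl sqrtrM ?addr_ge0 ?sqr_ge0 //.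
  by rewrite sqrtr_sqr ger0_norm.
rewrite /edist2 /psi /=.
have shift (s t u v : R) : s + u - (t + v) = (s - t) + (u - v) by ring.
by rewrite !shift; exact: minkowski2.
Qed.

Lemma edist2_lt_coord x y e : edist2 x y < e ->
  (x.1 - e < y.1 < x.1 + e) && (x.2 - e < y.2 < x.2 + e).
Proof.
move=> xy; rewrite -!ltr_distlC.
by rewrite (le_lt_trans (edist2_ge_dist1 x y) xy) (le_lt_trans (edist2_ge_dist2 x y) xy).
Qed.

Lemma cvg_edist2P (T : Type) (F : set_system T) {FF : Filter F} (f : T -> P) l :
  f @ F --> l <-> forall e, 0 < e -> \forall t \near F, edist2 (f t) l < e.
Proof.
split=> [/cvgrPdist_lt f_cvg e e0 | f_near].
  have e2 : 0 < e / 2 by rewrite divr_gt0.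
  apply: filterS (f_cvg _ e2) => t.
  rewrite prod_normE gt_max => /andP [h1 h2].
  apply: le_lt_trans (edist2_le_dist_sum _ _) _.
  by rewrite [e]splitr ltrD // distrC.
apply/cvgrPdist_lt => e e0; apply: filterS (f_near _ e0) => t h.
rewrite prod_normE gt_max distrC (le_lt_trans (edist2_ge_dist1 _ _) h).
by rewrite distrC (le_lt_trans (edist2_ge_dist2 _ _) h).
Qed.

Lemma closed_edist2 (K : set P) x : closed K ->
  (forall e, 0 < e -> exists2 z, K z & edist2 x z < e) -> K x.
Proof.
move=> cK near_x; apply: cK => B /nbhs_ballP [e /= e0 eB].
have [z Kz xz] := near_x e e0; exists z; split => //; apply: eB.
rewrite -ball_normE /ball_ /= prod_normE gt_max.
by rewrite (le_lt_trans (edist2_ge_dist1 _ _) xz) (le_lt_trans (edist2_ge_dist2 _ _) xz).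
Qed.

End EuclideanDistance.

Section RealFacts.
Variable R : realType.
Set Implicit Arguments. Unset Strict Implicit.

Lemma max_dist_bounds (x y : R) :
  [/\ x <= Num.max x y, y <= Num.max x y,
      Num.max x y - `|x - y| <= x & Num.max x y - `|x - y| <= y].
Proof.
have [xy|yx] := leP x y.
  by rewrite distrC ger0_norm ?subr_ge0 //; split; lra.
by rewrite ger0_norm ?subr_ge0 ?(ltW yx); split; lra.
Qed.


Lemma geometric_lt (k : nat) (M e : R) : (1 < k)%N -> 0 < e ->
  exists m : nat, M / k%:R ^+ m < e.
Proof.
move=> k1 e0; have kp : 0 < (k%:R : R) by rewrite ltr0n; lia.
have [M0|M0] := lerP M 0; first by exists 0%N; rewrite expr0 divr1 (le_lt_trans M0).
have := archi_boundP (ltW (divr_gt0 M0 e0)).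
set m := Num.Def.archi_bound (M / e) => Mm; exists m.
have m_le_km : (m%:R : R) <= k%:R ^+ m.
  by rewrite -natrX ler_nat ltnW // (leq_trans (ltn_expl m (ltnSn 1))) // leq_exp2r.
rewrite ltr_pdivrMr ?exprn_gt0 // mulrC -ltr_pdivrMr //.
exact: lt_le_trans Mm m_le_km.
Qed.

Lemma le_geometric (k : nat) (a b M : R) : (1 < k)%N ->
  (forall m : nat, a <= b + M / k%:R ^+ m) -> a <= b.
Proof.
move=> k1 ab_le; rewrite leNgt; apply/negP; rewrite -subr_gt0 => /(geometric_lt M k1).
by move=> [m]; rewrite ltNge lerBlDl ab_le.
Qed.

End RealFacts.

Section Cells.
Variable R : realType.
Set Implicit Arguments. Unset Strict Implicit.
Notation P := (R * R)%type.
Implicit Types (x y p q u v : P).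

Definition cell (k : nat) p : set P :=
  [set x | p.1 <= x.1 <= p.1 + k%:R^-1 /\ p.2 <= x.2 <= p.2 + k%:R^-1].

Lemma psi_unit_square (k : nat) p : (0 < k)%N -> psi k p @` @unit_square R = cell k p.
Proof.
move=> k0; have kp : 0 < (k%:R : R) by rewrite ltr0n.
have scaled (t : R) : 0 <= t <= 1 -> 0 <= t / k%:R <= k%:R^-1.
  case/andP=> t0 t1; rewrite (divr_ge0 t0 (ltW kp)) /=.
  by rewrite -[X in _ <= X]mul1r ler_pM2r ?invr_gt0.
apply/seteqP; split=> [_ [y [/scaled/andP [y1 y1'] /scaled/andP [y2 y2']] <-] | x].
  by rewrite /cell /psi /=; split; apply/andP; split; lra.
case=> /andP [x1 x1'] /andP [x2 x2'].
exists ((x.1 - p.1) * k%:R, (x.2 - p.2) * k%:R).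
  by split; apply/andP; split;
    rewrite /= ?mulr_ge0 ?subr_ge0 ?(ltW kp) // -ler_pdivlMr // mul1r lerBlDl.
by rewrite /psi /= !mulfK ?gt_eqF // !subrK -surjective_pairing.
Qed.

Definition cells_apart (k : nat) p q :=
  k%:R^-1 <= `|p.1 - q.1| \/ k%:R^-1 <= `|p.2 - q.2|.

Lemma cells_apart_open_cell (k : nat) p q x : cells_apart k q p ->
  p.1 < x.1 < p.1 + k%:R^-1 -> p.2 < x.2 < p.2 + k%:R^-1 -> ~ cell k q x.
Proof.
by case=> + /andP [? ?] /andP [? ?] [/andP [? ?] /andP [? ?]];
  rewrite ler_normr => /orP [] ?; lra.
Qed.

Lemma segment_no_corner u v x (h1 h2 : R) : 0 < h1 -> 0 < h2 ->
  segment u v x -> segment u v (x.1 + h1, x.2) -> segment u v (x.1, x.2 + h2) ->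
  False.
Proof.
move=> h10 h20 [t0 _ <-] [t1 _ /pair_equal_spec [e11 e12]] [t2 _ /pair_equal_spec [e21 e22]].
move: e11 e12 e21 e22 => /=.
set d1 := v.1 - u.1; set d2 := v.2 - u.2 => e11 e12 e21 e22.
have A : (t1 - t0) * d1 = h1 by rewrite mulrBl; lra.
have B : (t1 - t0) * d2 = 0 by rewrite mulrBl; lra.
have C : (t2 - t0) * d2 = h2 by rewrite mulrBl; lra.
have : h1 * h2 = 0.
  rewrite -A -C.
  have -> : (t1 - t0) * d1 * ((t2 - t0) * d2) = (t1 - t0) * d2 * ((t2 - t0) * d1) by ring.
  by rewrite B mul0r.
by move/eqP; rewrite mulf_eq0 !gt_eqF.
Qed.

Lemma level1E (k N : nat) (c : 'I_N -> P) : (0 < k)%N ->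
  level1 k c = \bigcup_(i in [set: 'I_N]) cell k (c i).
Proof. by move=> k0; apply: eq_bigcupr => i _; rewrite psi_unit_square. Qed.

End Cells.

Section Sequences.
Variable R : realType.
Set Implicit Arguments. Unset Strict Implicit.

Lemma increasing_seq_ge_id (f : nat -> nat) : increasing_seq f -> forall n, (n <= f n)%N.
Proof.
by move/increasing_seqP => f_incr; elim=> // n IH; apply: leq_ltn_trans IH (f_incr n).
Qed.

Lemma ge_id_cvg_infty (f : nat -> nat) : (forall n, (n <= f n)%N) -> f @ \oo --> \oo.
Proof.
move=> f_ge A [M _ MA]; exists M => // n /= Mn; apply: MA.
exact: leq_trans Mn (f_ge n).
Qed.

Lemma not_near_infty (Q : nat -> Prop) : ~ (\forall n \near \oo, Q n) ->
  forall M, exists n, (M <= n)%N /\ ~ Q n.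
Proof.
move=> notQ M; apply: contrapT => /forallNP Q_ge; apply: notQ; exists M => // n /= Mn.
by have /not_andP [] := Q_ge n => // /contrapT.
Qed.

Lemma finite_bolzano_weierstrass (I : finType) (u : I -> nat -> R) (M : R) :
  (forall i n, `|u i n| <= M) ->
  exists phi : nat -> nat, (forall n, (n <= phi n)%N) /\
    forall i, exists l : R, (fun n => u i (phi n)) @ \oo --> l.
Proof.
move=> u_le; suff [phi [phi_ge phi_cvg]] : exists phi : nat -> nat,
    (forall n, (n <= phi n)%N) /\
    forall i, i \in enum I -> exists l : R, (fun n => u i (phi n)) @ \oo --> l.
  by exists phi; split => // i; apply: phi_cvg; rewrite mem_enum.
elim: (enum I) => [|a s [phi [phi_ge phi_cvg]]]; first by exists id.
have ua_bounded : bounded_fun (fun n => u a (phi n)).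
  exists M; split; first by rewrite num_real.
  by move=> M' MM' n _; apply: le_trans (u_le a (phi n)) (ltW MM').
have [psi psi_incr /cvg_ex [la ua_cvg]] := bolzano_weierstrass ua_bounded.
have psi_ge := increasing_seq_ge_id psi_incr.
exists (phi \o psi); split => [n|i]; first exact: leq_trans (psi_ge n) (phi_ge _).
rewrite inE => /orP [/eqP -> | /phi_cvg [l ui_cvg]]; first by exists la.
by exists l; apply: cvg_comp (ge_id_cvg_infty psi_ge) ui_cvg.
Qed.

Lemma finite_min_gt0 (I : finType) (f : I -> R) : (forall i, 0 < f i) ->
  exists2 r, 0 < r & forall i, r <= f i.
Proof.
move=> f_gt0; exists (\big[Order.min/1]_i f i); last by move=> i; apply: bigmin_le.
by apply: lt_bigmin => // i _; apply: f_gt0.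
Qed.

Lemma finite_choice_gt0 (I : finType) (Q : I -> R -> Prop) :
  (forall i e e', 0 < e -> e <= e' -> Q i e -> Q i e') ->
  (forall e, 0 < e -> exists i, Q i e) -> exists i, forall e, 0 < e -> Q i e.
Proof.
move=> Q_mono Q_some; apply: contrapT => /forallNP notQ.
have /choice [g g_bad] i : exists e, 0 < e /\ ~ Q i e.
  by have /existsNP [e /not_implyP [e0 nQ]] := notQ i; exists e.
have [r r0 r_le] := finite_min_gt0 (fun i => (g_bad i).1).
have [i Qi] := Q_some r r0.
exact: (g_bad i).2 (Q_mono i r _ r0 (r_le i) Qi).
Qed.

End Sequences.

Section USCFacts.
Variable R : realType.
Set Implicit Arguments. Unset Strict Implicit.
Notation P := (R * R)%type.
Variables (k N : nat) (c : 'I_N -> P).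
Hypothesis U : USC k c.

Lemma USC_k_ge3 : (3 <= k)%N.
Proof. by case: U => [[]]. Qed.

Let k0 : (0 < k)%N. Proof. by have := USC_k_ge3; lia. Qed.
Let kp : 0 < (k%:R : R). Proof. by rewrite ltr0n. Qed.

Lemma USC_cells_apart i j : i != j -> cells_apart k (c i) (c j).
Proof.
move=> ij; case: U => _ [/(_ i j ij) + _]; rewrite !psi_unit_square //.
set a := c i; set b := c j.
apply: contraPP => /not_orP [/negP + /negP]; rewrite -!ltNge => h1 h2.
have gap1_gt0 : 0 < k%:R^-1 - `|a.1 - b.1| by rewrite subr_gt0.
have gap2_gt0 : 0 < k%:R^-1 - `|a.2 - b.2| by rewrite subr_gt0.
have [a1 b1 a1' b1'] := max_dist_bounds a.1 b.1.
have [a2 b2 a2' b2'] := max_dist_bounds a.2 b.2.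
set m1 := Num.max a.1 b.1 in a1 b1 a1' b1' *.
set m2 := Num.max a.2 b.2 in a2 b2 a2' b2' *.
have in_meet q : m1 <= q.1 <= m1 + (k%:R^-1 - `|a.1 - b.1|) ->
    m2 <= q.2 <= m2 + (k%:R^-1 - `|a.2 - b.2|) -> (cell k a `&` cell k b) q.
  by move=> /andP [? ?] /andP [? ?]; split; split; apply/andP; split; lra.
have m_meet : (cell k a `&` cell k b) (m1, m2) by apply: in_meet => /=; lra.
case=> [E | [u [v E]]]; first by rewrite E in m_meet.
apply: (segment_no_corner (u := u) (v := v) (x := (m1, m2)) gap1_gt0 gap2_gt0); rewrite -E.
- exact: m_meet.
- by apply: in_meet => /=; lra.
- by apply: in_meet => /=; lra.
Qed.

Lemma USC_cell_in_square i : [/\ 0 <= (c i).1, (c i).1 + k%:R^-1 <= 1,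
  0 <= (c i).2 & (c i).2 + k%:R^-1 <= 1].
Proof.
case: U => _ [_ [_ [_ [_]]]]; rewrite level1E // => sub.
have kV : 0 < (k%:R : R)^-1 by rewrite invr_gt0.
have in_square x : cell k (c i) x -> unit_square x by move=> cx; apply: sub; exists i.
have [/andP [lo1 _] /andP [lo2 _]] : unit_square (c i).
  by apply: in_square; split; apply/andP; split; lra.
have [/andP [_ hi1] /andP [_ hi2]] :
    unit_square ((c i).1 + k%:R^-1, (c i).2 + k%:R^-1).
  by apply: in_square; split; apply/andP; split => /=; lra.
by [].
Qed.

Lemma USC_origin : exists i, c i = (0, 0).
Proof.
case: U => _ [_ [_ [_ [bot _]]]].
have : level1 k c (0, 0) by apply: bot; split; rewrite //= lexx ler01.
rewrite level1E // => -[i _ [/andP [h1 _] /andP [h2 _]]].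
have [lo1 _ lo2 _] := USC_cell_in_square i.
by exists i; rewrite [c i]surjective_pairing; congr pair; apply/eqP; rewrite eq_le ?h1 ?h2.
Qed.

Lemma USC_top_corner :
  exists i, 1 - k%:R^-1 <= (c i).1 /\ 1 - k%:R^-1 <= (c i).2.
Proof.
case: U => _ [_ [_ [sym [bot _]]]].
have : level1 k c (1, 1).
  rewrite -(sym true true false); exists (0, 0); last by rewrite /sq_iso /= !subr0.
  by apply: bot; split; rewrite //= lexx ler01.
rewrite level1E // => -[i _ [/andP [_ h1] /andP [_ h2]]].
by exists i; split; rewrite /= in h1 h2; lra.
Qed.

Variable K : set P.
Hypothesis A : attractor k c K.

Lemma attractor_psi i y : K y -> K (psi k (c i) y).
Proof. by case: A => _ _ E Ky; rewrite E; exists i => //; exists y. Qed.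

Lemma attractor_dec x : K x -> exists i, exists2 y, K y & x = psi k (c i) y.
Proof. by case: A => _ _ E; rewrite {1}E => -[i _ [y Ky <-]]; exists i, y. Qed.

Lemma attractor_sub_square : K `<=` @unit_square R.
Proof.
have [M KM] : exists M : R, forall x, K x -> `|x| <= M.
  case: A => _ /compact_bounded [M [_ HM]] _.
  by exists (M + 1) => x Kx; apply: HM => //; rewrite ltrDl.
have k1 : (1 < k)%N by have := USC_k_ge3; lia.
have shrink (a y t : R) : 0 <= a -> a + k%:R^-1 <= 1 -> -t <= y <= 1 + t ->
    - (t / k%:R) <= y / k%:R + a <= 1 + t / k%:R.
  move=> a0 a1 /andP [y0 y1].
  have : - t / k%:R <= y / k%:R <= (1 + t) / k%:R by rewrite !ler_pM2r ?invr_gt0 ?y0.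
  by rewrite mulNr mulrDl mul1r => /andP [? ?]; apply/andP; split; lra.
have near_square m x : K x ->
    -(M / k%:R ^+ m) <= x.1 <= 1 + M / k%:R ^+ m /\
    -(M / k%:R ^+ m) <= x.2 <= 1 + M / k%:R ^+ m.
  elim: m x => [|m IH] x Kx.
    move: (KM x Kx); rewrite expr0 divr1 prod_normE ge_max !ler_norml.
    by case/andP=> /andP [? ?] /andP [? ?]; split; apply/andP; split; lra.
  have [i [y Ky ->]] := attractor_dec Kx.
  have [c1 c1' c2 c2'] := USC_cell_in_square i; have [y1 y2] := IH y Ky.
  by rewrite exprS invfM mulrA [M / k%:R / _]mulrAC; split; apply: shrink.
move=> x Kx; split; apply/andP; split;
  apply: (le_geometric (M := M) k1) => m; have [/andP [? ?] /andP [? ?]] := near_square m x Kx;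
  lra.
Qed.

Lemma attractor_cover x : K x -> exists j, cell k (c j) x.
Proof.
move=> /attractor_dec [j [y Ky ->]]; exists j.
by rewrite -psi_unit_square //; exists y => //; apply: attractor_sub_square.
Qed.

Lemma attractor_near_origin r : 0 < r ->
  exists2 z, K z & (0 < z.1 < r) /\ (0 < z.2 < r).
Proof.
move=> r0; have [i0 c0] := USC_origin; have [i1 [top1 top2]] := USC_top_corner.
have k1 : (1 < k)%N by have := USC_k_ge3; lia.
have kV1 : k%:R^-1 < (1 : R) by rewrite invf_lt1 // ltr1n.
case: A => -[y Ky] _ _; set z := psi k (c i1) y.
have Kz : K z by apply: attractor_psi.
have [/andP [_ z1] /andP [_ z2]] := attractor_sub_square Kz.
have [/andP [y1 _] /andP [y2 _]] := attractor_sub_square Ky.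
have [z1_gt0 z2_gt0] : 0 < z.1 /\ 0 < z.2.
  have := divr_ge0 y1 (ltW kp); have := divr_ge0 y2 (ltW kp).
  by rewrite /= => ? ?; split; lra.
have scaled m : K (z.1 / k%:R ^+ m, z.2 / k%:R ^+ m).
  elim: m => [|m IH]; first by rewrite expr0 !divr1 -surjective_pairing.
  have := attractor_psi i0 IH; rewrite /psi c0 /= !addr0 exprS invfM !mulrA.
  by rewrite ![_ / k%:R ^+ m / _]mulrAC.
have [m km_r] := geometric_lt 1 k1 r0.
have km0 : 0 < (k%:R : R) ^+ m by apply: exprn_gt0.
exists (z.1 / k%:R ^+ m, z.2 / k%:R ^+ m) => //=.
by rewrite !divr_gt0 //= !(le_lt_trans _ km_r) // ler_pM2r ?invr_gt0.
Qed.

End USCFacts.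

Section HausdorffDistance.
Variable R : realType.
Set Implicit Arguments. Unset Strict Implicit.
Notation P := (R * R)%type.
Implicit Types (x : P) (A B : set P).
Local Open Scope ereal_scope.

Lemma pt_set_dist_ge0 x B : 0 <= pt_set_dist x B.
Proof. by apply/ereal_infP => _ [y _ <-]; rewrite lee_fin edist2_ge0. Qed.

Lemma hausdorff_dist_ge0 A B : A !=set0 -> 0 <= hausdorff_dist A B.
Proof.
move=> [x Ax]; rewrite /hausdorff_dist le_max (le_trans (pt_set_dist_ge0 x B)) //.
by apply: ereal_sup_ubound; exists x.
Qed.

Lemma pt_set_dist_lt x B (e : R) :
  pt_set_dist x B < e%:E -> exists2 z, B z & (edist2 x z < e)%R.
Proof. by move/ereal_inf_lt => [_ [z Bz <-]]; rewrite lte_fin; exists z. Qed.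

Lemma hausdorff_dist_lt A B (e : R) : hausdorff_dist A B < e%:E ->
  (forall x, A x -> exists2 z, B z & (edist2 x z < e)%R) /\
  (forall z, B z -> exists2 x, A x & (edist2 z x < e)%R).
Proof.
rewrite /hausdorff_dist gt_max => /andP [AB BA]; split => x Ax; apply: pt_set_dist_lt.
- by apply: le_lt_trans AB; apply: ereal_sup_ubound; exists x.
- by apply: le_lt_trans BA; apply: ereal_sup_ubound; exists x.
Qed.

Lemma ereal_sup_pt_set_dist_le A B (t : R) :
  (forall x, A x -> forall e, (0 < e)%R -> exists2 z, B z & (edist2 x z <= t + e)%R) ->
  ereal_sup [set pt_set_dist x B | x in A] <= t%:E.
Proof.
move=> near_B; apply: ge_ereal_sup => _ [x Ax <-]; apply/lee_addgt0Pr => e e0.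
have [z Bz xz] := near_B x Ax e e0.
apply: le_trans (ereal_inf_lbound _) _; first by exists z.
by rewrite -EFinD lee_fin.
Qed.

Lemma cvge0_ge0 (u : nat -> \bar R) : (forall n, 0 <= u n) ->
  (forall e, (0 < e)%R -> \forall n \near \oo, u n <= e%:E) -> u @ \oo --> 0.
Proof.
move=> u0 u_le; apply/fine_cvgP; split.
  apply: filterS (u_le 1%R ltr01) => n un.
  by rewrite ge0_fin_numE ?u0 // (le_lt_trans un) ?ltey.
apply/cvgrPdist_lt => e e0; have e2 : (0 < e / 2)%R by rewrite divr_gt0.
apply: filterS (u_le _ e2) => n /=; move: (u0 n); case: (u n) => // r.
rewrite !lee_fin /= sub0r normrN => r0 re; rewrite ger0_norm //.
by apply: le_lt_trans re _; rewrite ltr_pdivrMr // ltr_pMr // ltr1n.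
Qed.

Lemma hausdorff_cvg_near (Kn : nat -> set P) K : hausdorff_cvg Kn K ->
  forall e, (0 < e)%R -> \forall n \near \oo, hausdorff_dist (Kn n) K < e%:E.
Proof.
move=> /fine_cvgP [fin /cvgrPdist_lt Kn_cvg] e e0.
apply: filterS2 fin (Kn_cvg e e0) => n fn; rewrite -(fineK fn) lte_fin /= sub0r normrN.
exact: le_lt_trans (ler_norm _).
Qed.

Lemma hausdorff_cvg_subseq (Kn : nat -> set P) K (h : nat -> nat) :
  (forall n, (n <= h n)%N) -> hausdorff_cvg Kn K -> hausdorff_cvg (Kn \o h) K.
Proof. by move=> h_ge Kn_cvg; apply: cvg_comp (ge_id_cvg_infty h_ge) Kn_cvg. Qed.

End HausdorffDistance.

Section ApproximateAttractors.
Variable R : realType.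
Set Implicit Arguments. Unset Strict Implicit.
Notation P := (R * R)%type.

Lemma unit_square_edist2_le2 (x z : P) : unit_square x -> unit_square z -> edist2 x z <= 2.
Proof.
move=> [/andP [? ?] /andP [? ?]] [/andP [? ?] /andP [? ?]].
apply: le_trans (edist2_le_dist_sum x z) _.
have : `|x.1 - z.1| <= 1 /\ `|x.2 - z.2| <= 1.
  by rewrite !ler_norml; split; apply/andP; split; lra.
lra.
Qed.

Lemma attractor_approx (k N : nat) (a b : 'I_N -> P) (A B : set P) (d : R) :
  (1 < k)%N -> A `<=` @unit_square R -> B `<=` @unit_square R -> B !=set0 ->
  (forall x, A x -> exists i, exists2 y, A y & x = psi k (a i) y) ->
  (forall i z, B z -> B (psi k (b i) z)) ->
  0 <= d -> (forall i, edist2 (a i) (b i) <= d) ->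
  forall x, A x -> forall e, 0 < e ->
    exists2 z, B z & edist2 x z <= d * k%:R / (k%:R - 1) + e.
Proof.
move=> k1 A_sq B_sq [z0 Bz0] A_dec B_psi d0 ab_d.
have kp : 0 < (k%:R : R) by rewrite ltr0n; lia.
have k1p : 0 < (k%:R : R) - 1 by rewrite subr_gt0 ltr1n.
set C := d * k%:R / (k%:R - 1).
have C_fix : C / k%:R + d = C by rewrite /C; field; rewrite !gt_eqF.
pose within t := forall x, A x -> forall e, 0 < e ->
  exists2 z, B z & edist2 x z <= t + e.
have within_le t t' : t <= t' -> within t -> within t'.
  move=> tt' At x Ax e e0; have [z Bz xz] := At x Ax e e0.
  by exists z => //; lra.
have within_step t : within t -> within (t / k%:R + d).
  move=> At _ /A_dec [i [y Ay ->]] e e0.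
  have [z Bz yz] := At y Ay (e * k%:R) (mulr_gt0 e0 kp).
  exists (psi k (b i) z); first exact: B_psi.
  apply: le_trans (edist2_psi _ _ _ _ (ltnW k1)) _.
  have : edist2 y z / k%:R <= (t + e * k%:R) / k%:R by rewrite ler_pM2r ?invr_gt0.
  by rewrite mulrDl mulfK ?gt_eqF //; have := ab_d i; lra.
have within_iter m : within (2 / k%:R ^+ m + C).
  elim: m => [|m IH].
    have C0 : 0 <= C by rewrite /C divr_ge0 ?mulr_ge0 // ltW.
    apply: (within_le 2); first by rewrite expr0 divr1 lerDl.
    move=> x Ax e e0; exists z0 => //.
    by have := unit_square_edist2_le2 (A_sq _ Ax) (B_sq _ Bz0); lra.
  apply: within_le (within_step _ IH).
  by rewrite mulrDl -{2}C_fix addrA lerD2r exprS invfM mulrA mulrAC.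
move=> x Ax e e0; have e2 : 0 < e / 2 by rewrite divr_gt0.
have [m km] := geometric_lt 2 k1 e2.
have [z Bz xz] := within_iter m x Ax (e / 2) e2.
by exists z => //; rewrite [e]splitr; lra.
Qed.

Lemma hausdorff_cvg_of_cvg_maps (k N : nat) (cn : nat -> 'I_N -> P) (c : 'I_N -> P)
    (Kn : nat -> set P) (K : set P) :
  (forall n, USC k (cn n)) -> USC k c ->
  (forall n, attractor k (cn n) (Kn n)) -> attractor k c K ->
  (forall i, (fun n => cn n i) @ \oo --> c i) -> hausdorff_cvg Kn K.
Proof.
move=> Un U An A cn_cvg.
have k1 : (1 < k)%N by have := USC_k_ge3 U; lia.
have kp : 0 < (k%:R : R) by rewrite ltr0n; lia.
have k1p : 0 < (k%:R : R) - 1 by rewrite subr_gt0 ltr1n.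
apply: cvge0_ge0 => [n|e e0]; first by apply: hausdorff_dist_ge0; case: (An n).
set d := e * (k%:R - 1) / k%:R.
have d0 : 0 < d by rewrite /d divr_gt0 // mulr_gt0.
have de : d * k%:R / (k%:R - 1) = e by rewrite /d; field; rewrite !gt_eqF.
have : \forall n \near \oo, forall i, edist2 (cn n i) (c i) < d.
  by apply: filter_forall => i; exact: (cvg_edist2P _ _).1 (cn_cvg i) d d0.
apply: filterS => n cn_d; rewrite /hausdorff_dist ge_max.
have sqK := attractor_sub_square U A; have sqKn := attractor_sub_square (Un n) (An n).
rewrite !ereal_sup_pt_set_dist_le // => x Kx e' e'0; rewrite -de.
- apply: (attractor_approx k1 sqK sqKn _ (attractor_dec A) (attractor_psi (An n))
    (ltW d0)) => //.
  + by case: (An n).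
  + by move=> i; rewrite edist2C ltW.
- apply: (attractor_approx k1 sqKn sqK _ (attractor_dec (An n)) (attractor_psi A)
    (ltW d0)) => //.
  + by case: A.
  + by move=> i; apply: ltW.
Qed.

End ApproximateAttractors.

Section CellMatching.
Variable R : realType.
Set Implicit Arguments. Unset Strict Implicit.
Notation P := (R * R)%type.
Variables (k N : nat) (K : set P).
Hypothesis k_gt0 : (0 < k)%N.
Hypothesis K_near_origin :
  forall r, 0 < r -> exists2 z, K z & (0 < z.1 < r) /\ (0 < z.2 < r).

Definition pairwise_apart (a : 'I_N -> P) :=
  forall i j, i != j -> cells_apart k (a i) (a j).

Definition cell_cover (a : 'I_N -> P) := forall x, K x -> exists j, cell k (a j) x.

Definition psi_invariant (a : 'I_N -> P) := forall i y, K y -> K (psi k (a i) y).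

Lemma min_unmatched_absurd (a b : 'I_N -> P) p :
  pairwise_apart a -> cell_cover b -> (forall y, K y -> K (psi k (a p) y)) ->
  (forall j, b j <> a p) ->
  (forall j, (forall i, a i <> b j) -> (a p).1 + (a p).2 <= (b j).1 + (b j).2) ->
  False.
Proof.
move=> a_apart b_cover ap_inv b_ne_ap ap_min.
have kp : 0 < (k%:R : R) by rewrite ltr0n.
set ap := a p in ap_inv b_ne_ap ap_min.
pose gap j := Num.max ((b j).1 - ap.1) ((b j).2 - ap.2).
have [r r_gt0 r_le] :
    exists2 r, 0 < r & forall j, r <= if 0 < gap j then gap j else 1.
  by apply: finite_min_gt0 => j; case: ifP => // _; exact: ltr01.
have [z Kz [/andP [z1 z1'] /andP [z2 z2']]] : exists2 z, K z &
    (0 < z.1 < Num.min 1 (r * k%:R)) /\ (0 < z.2 < Num.min 1 (r * k%:R)).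
  by apply: K_near_origin; rewrite lt_min ltr01 mulr_gt0.
move: z1' z2'; rewrite !lt_min => /andP [z1a z1b] /andP [z2a z2b].
have scaled t : 0 < t -> t < 1 -> t < r * k%:R ->
    [/\ 0 < t / k%:R, t / k%:R < k%:R^-1 & t / k%:R < r].
  move=> t0 t1 tr; split; first exact: divr_gt0.
    by rewrite -[X in _ < X]mul1r ltr_pM2r ?invr_gt0.
  by rewrite ltr_pdivrMr.
have [zk1 zk1a zk1b] := scaled _ z1 z1a z1b.
have [zk2 zk2a zk2b] := scaled _ z2 z2a z2b.
have [j bj_x] := b_cover _ (ap_inv z Kz).
have [[i ai_bj] | unmatched] := pselect (exists i, a i = b j).
  have ip : i != p by apply: contra_notN (b_ne_ap j) => /eqP ip; rewrite -ai_bj ip.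
  rewrite -ai_bj in bj_x; move: bj_x.
  by apply: (cells_apart_open_cell (a_apart i p ip)) => /=; apply/andP; split; lra.
have /ap_min sum_le : forall i, a i <> b j by move=> i ai_bj; apply: unmatched; exists i.
case: bj_x => /andP [bj1 _] /andP [bj2 _]; rewrite /= in bj1 bj2.
have gap_gt0 : 0 < gap j.
  rewrite lt_max !subr_gt0 !ltNge -negb_and; apply/negP => /andP [? ?].
  apply: (b_ne_ap j); rewrite [b j]surjective_pairing [ap]surjective_pairing.
  by congr pair; lra.
by have := r_le j; rewrite gap_gt0 le_max => /orP [] ?; lra.
Qed.

Lemma cells_match (a b : 'I_N -> P) :
  pairwise_apart a -> pairwise_apart b -> cell_cover a -> cell_cover b ->
  psi_invariant a -> psi_invariant b -> forall i, exists j, b j = a i.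
Proof.
move=> a_apart b_apart a_cover b_cover a_inv b_inv i0.
apply: contrapT => /forallNP b_ne_ai0.
pose pos (t : 'I_N + 'I_N) := match t with inl i => a i | inr j => b j end.
pose unmatched (t : 'I_N + 'I_N) := match t with
  | inl i => [forall j, b j != a i] | inr j => [forall i, a i != b j] end.
have u0 : unmatched (inl i0) by apply/forallP => j; apply/eqP; exact: b_ne_ai0.
case: (arg_minP (fun t => (pos t).1 + (pos t).2) u0) => -[p|q] /forallP p_unm p_min.
- apply: (min_unmatched_absurd a_apart b_cover (a_inv p)) => [j|j j_unm].
    exact/eqP/p_unm.
  by apply: (p_min (inr j)); apply/forallP => i; apply/eqP.
- apply: (min_unmatched_absurd b_apart a_cover (b_inv q)) => [j|j j_unm].
    exact/eqP/p_unm.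
  by apply: (p_min (inl j)); apply/forallP => i; apply/eqP.
Qed.

End CellMatching.

Section LimitConfiguration.
Variable R : realType.
Set Implicit Arguments. Unset Strict Implicit.
Notation P := (R * R)%type.
Variables (k N : nat) (a : nat -> 'I_N -> P) (b : 'I_N -> P) (A : nat -> set P) (K : set P).
Hypothesis Ua : forall m, USC k (a m).
Hypothesis Aa : forall m, attractor k (a m) (A m).
Hypothesis a_cvg : forall j, (fun m => a m j) @ \oo --> b j.
Hypothesis A_cvg : hausdorff_cvg A K.
Hypothesis K_closed : closed K.

Let a_near j e : 0 < e -> \forall m \near \oo, edist2 (a m j) (b j) < e.
Proof. exact: (cvg_edist2P _ _).1 (@a_cvg j) e. Qed.

Lemma limit_pairwise_apart : pairwise_apart k b.
Proof.
move=> j j' jj'; apply: contrapT => /not_orP [/negP + /negP]; rewrite -!ltNge => h1 h2.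
set g := Num.min (k%:R^-1 - `|(b j).1 - (b j').1|) (k%:R^-1 - `|(b j).2 - (b j').2|).
have [g1 g2] : g <= k%:R^-1 - `|(b j).1 - (b j').1| /\
    g <= k%:R^-1 - `|(b j).2 - (b j').2| by rewrite !ge_min !lexx ?orbT.
have half_g_gt0 : 0 < g / 2 by rewrite divr_gt0 // lt_min !subr_gt0 h1 h2.
have [m [near_j near_j']] :=
  filter_ex (filterI (a_near j half_g_gt0) (a_near j' half_g_gt0)).
have coord_near (x y x' y' : R) : `|x - x'| < g / 2 -> `|y - y'| < g / 2 ->
    g <= k%:R^-1 - `|x' - y'| -> `|x - y| < k%:R^-1.
  move=> xx' yy' x'y'; have := ler_distD x' x y; have := ler_distD y' x' y.
  by rewrite (distrC y'); lra.
case: (USC_cells_apart (Ua m) jj') => /=; apply/negP; rewrite -ltNge.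
- apply: coord_near g1; apply: le_lt_trans (edist2_ge_dist1 _ _) _;
    [exact: near_j | exact: near_j'].
- apply: coord_near g2; apply: le_lt_trans (edist2_ge_dist2 _ _) _;
    [exact: near_j | exact: near_j'].
Qed.

Let hausdorff_near e : 0 < e -> \forall m \near \oo,
  (forall x, A m x -> exists2 z, K z & edist2 x z < e) /\
  (forall z, K z -> exists2 x, A m x & edist2 z x < e).
Proof. by move=> e0; apply: filterS (hausdorff_cvg_near A_cvg e0) => m /hausdorff_dist_lt. Qed.

Lemma limit_psi_invariant : psi_invariant k K b.
Proof.
move=> j y Ky; apply: (closed_edist2 (x := psi k (b j) y) K_closed) => e e0.
have k0 : (0 < k)%N by have := USC_k_ge3 (Ua 0); lia.
have e3 : 0 < e / 3 by rewrite divr_gt0.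
have [m [near_j [AK KA]]] := filter_ex (filterI (a_near j e3) (hausdorff_near e3)).
have [x Ax yx] := KA y Ky.
have [z Kz xz] := AK _ (attractor_psi (Aa m) j Ax).
exists z => //; apply: le_lt_trans (edist2_triangle _ (psi k (a m j) x) _) _.
have := edist2_psi (b j) (a m j) y x k0.
have : edist2 y x / k%:R <= edist2 y x.
  by rewrite ler_pdivrMr ?ltr0n // ler_peMr ?edist2_ge0 // ler1n.
by rewrite edist2C in near_j; lra.
Qed.

Lemma limit_cell_cover : cell_cover k K b.
Proof.
move=> x Kx.
pose near_cell j (e : R) :=
  ((b j).1 - e <= x.1 <= (b j).1 + k%:R^-1 + e) /\
  ((b j).2 - e <= x.2 <= (b j).2 + k%:R^-1 + e).
have [j x_near] : exists j, forall e, 0 < e -> near_cell j e.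
  apply: finite_choice_gt0 => [j e e' e0 ee'|e e0]; rewrite /near_cell.
    by case=> /andP [? ?] /andP [? ?]; split; apply/andP; split; lra.
  have e2 : 0 < e / 2 by rewrite divr_gt0.
  have all_near : \forall m \near \oo, forall j, edist2 (a m j) (b j) < e / 2.
    by apply: filter_forall => j; apply: a_near.
  have [m [near_a [_ KA]]] := filter_ex (filterI all_near (hausdorff_near e2)).
  have [x' Ax' xx'] := KA x Kx.
  have [j [/andP [? ?] /andP [? ?]]] := attractor_cover (Ua m) (Aa m) Ax'.
  have /andP [/andP [? ?] /andP [? ?]] := edist2_lt_coord (near_a j).
  have /andP [/andP [? ?] /andP [? ?]] := edist2_lt_coord xx'.
  by exists j; split; apply/andP; split; lra.
exists j; split; apply/andP; split; apply/ler_addgt0Pr => e e0;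
  have [/andP [? ?] /andP [? ?]] := x_near e e0; lra.
Qed.

End LimitConfiguration.

Section PositionsFromAttractors.
Variable R : realType.
Set Implicit Arguments. Unset Strict Implicit.
Notation P := (R * R)%type.

Lemma USC_subseq_cvg (k N : nat) (a : nat -> 'I_N -> P) : (forall m, USC k (a m)) ->
  exists phi : nat -> nat, (forall m, (m <= phi m)%N) /\
    exists b : 'I_N -> P, forall j, (fun m => a (phi m) j) @ \oo --> b j.
Proof.
move=> Ua; pose u (t : 'I_N * bool) m := if t.2 then (a m t.1).1 else (a m t.1).2.
have u_le t m : `|u t m| <= 1.
  have kV0 : 0 <= (k%:R : R)^-1 by rewrite invr_ge0 ler0n.
  have [? ? ? ?] := USC_cell_in_square (Ua m) t.1.
  by rewrite /u ler_norml; case: t.2; apply/andP; split; lra.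
have [phi [phi_ge /choice [l l_cvg]]] := finite_bolzano_weierstrass u_le.
exists phi; split => //; exists (fun j => (l (j, true), l (j, false))) => j.
under eq_fun do rewrite [a _ j]surjective_pairing.
exact: cvg_pair (l_cvg (j, true)) (l_cvg (j, false)).
Qed.

Lemma hausdorff_cvg_positions_near (k N : nat) (cn : nat -> 'I_N -> P) (c : 'I_N -> P)
    (Kn : nat -> set P) (K : set P) :
  (forall n, USC k (cn n)) -> USC k c ->
  (forall n, attractor k (cn n) (Kn n)) -> attractor k c K -> hausdorff_cvg Kn K ->
  forall i e, 0 < e -> \forall n \near \oo, exists j, edist2 (cn n j) (c i) < e.
Proof.
move=> Un U An A Kn_cvg i e e0.
apply: contrapT => /not_near_infty /choice [g g_far].
have [phi [phi_ge [b b_cvg]]] := USC_subseq_cvg (fun m => Un (g m)).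
have gphi_ge m : (m <= g (phi m))%N by apply: leq_trans (phi_ge m) (g_far (phi m)).1.
have Kb_cvg := hausdorff_cvg_subseq gphi_ge Kn_cvg.
have K_closed : closed K by case: A => _ cK _; apply: compact_closed.
have k0 : (0 < k)%N by have := USC_k_ge3 U; lia.
have Ub m := Un (g (phi m)); have Ab m := An (g (phi m)).
have [j bj_ci] := cells_match k0 (attractor_near_origin U A)
  (USC_cells_apart U) (limit_pairwise_apart Ub b_cvg)
  (attractor_cover U A) (limit_cell_cover Ub Ab b_cvg Kb_cvg)
  (attractor_psi A) (limit_psi_invariant Ub Ab b_cvg Kb_cvg K_closed) i.
have [m near_m] := filter_ex ((cvg_edist2P _ _).1 (b_cvg j) e e0).
by apply: (g_far (phi m)).2; exists j; rewrite -bj_ci.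
Qed.

Lemma close_to_apart_injective (k N : nat) (c d : 'I_N -> P) (f : 'I_N -> 'I_N) :
  pairwise_apart k c -> (forall i, edist2 (d (f i)) (c i) < k%:R^-1 / 2) -> injective f.
Proof.
move=> c_apart d_close i i' fi_fi'; apply/eqP; apply: contraT => /c_apart ci_ci'.
have ci_ci'_close : edist2 (c i) (c i') < k%:R^-1.
  apply: le_lt_trans (edist2_triangle _ (d (f i)) _) _.
  rewrite edist2C {2}fi_fi' [k%:R^-1]splitr.
  exact: ltrD (d_close i) (d_close i').
have : k%:R^-1 <= edist2 (c i) (c i').
  by case: ci_ci' => /le_trans; apply; [exact: edist2_ge_dist1 | exact: edist2_ge_dist2].
by move/(lt_le_trans ci_ci'_close); rewrite ltxx.
Qed.

Lemma cvg_maps_of_hausdorff_cvg (k N : nat) (cn : nat -> 'I_N -> P) (c : 'I_N -> P)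
    (Kn : nat -> set P) (K : set P) :
  (forall n, USC k (cn n)) -> USC k c ->
  (forall n, attractor k (cn n) (Kn n)) -> attractor k c K -> hausdorff_cvg Kn K ->
  exists s : nat -> {perm 'I_N}, forall i, (fun n => cn n (s n i)) @ \oo --> c i.
Proof.
move=> Un U An A Kn_cvg.
have kp : 0 < (k%:R : R) by rewrite ltr0n; have := USC_k_ge3 U; lia.
pose err n (s : {perm 'I_N}) := \sum_i edist2 (cn n (s i)) (c i).
have /choice [s s_min] n : exists s : {perm 'I_N}, forall t, err n s <= err n t.
  case: (@arg_minP _ _ {perm 'I_N} 1%g xpredT (err n) isT) => s _ s_min.
  by exists s => t; apply: s_min.
exists s => i0; apply/cvg_edist2P => e e0.
have N1 : 0 < (N%:R : R) + 1 by rewrite ltr_wpDl ?ler0n.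
pose e' := Num.min (e / (N%:R + 1)) (k%:R^-1 / 2).
have [e'_gt0 e'_le1 e'_le2] : [/\ 0 < e', e' <= e / (N%:R + 1) & e' <= k%:R^-1 / 2].
  by rewrite lt_min !divr_gt0 ?invr_gt0 // !ge_min !lexx ?orbT.
have : \forall n \near \oo, forall i, exists j, edist2 (cn n j) (c i) < e'.
  apply: filter_forall => i.
  exact: hausdorff_cvg_positions_near Un U An A Kn_cvg i e' e'_gt0.
apply: filterS => n /choice [f f_close].
have f_inj := close_to_apart_injective (USC_cells_apart U)
  (fun i => lt_le_trans (f_close i) e'_le2).
have err_f : err n (perm f_inj) < e.
  apply: (@le_lt_trans _ _ (\sum_(i < N) e')).
    by apply: ler_sum => i _; rewrite permE ltW.
  rewrite sumr_const card_ord -mulr_natr.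
  apply: le_lt_trans (ler_wpM2r (ler0n _ N) e'_le1) _.
  by rewrite mulrAC ltr_pdivrMr // ltr_pM2l // ltrDl.
apply: le_lt_trans (le_trans _ (s_min n (perm f_inj))) err_f.
by rewrite /err (bigD1 i0) //= lerDl sumr_ge0 // => i _; apply: edist2_ge0.
Qed.

End PositionsFromAttractors.

Theorem lemma7p2 (R : realType) (k N : nat)
  (cn : nat -> 'I_N -> (R * R)%type) (c : 'I_N -> (R * R)%type)
  (Kn : nat -> set (R * R)) (K : set (R * R)) :
  (forall n, USC k (cn n)) -> USC k c ->
  (forall n, attractor k (cn n) (Kn n)) -> attractor k c K ->
  ((forall i : 'I_N, (fun n => cn n i) @ \oo --> c i) -> hausdorff_cvg Kn K) /\
  (hausdorff_cvg Kn K ->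
     exists s : nat -> {perm 'I_N},
       forall i : 'I_N, (fun n => cn n (s n i)) @ \oo --> c i).
Proof.
move=> Un U An A; split.
- exact: hausdorff_cvg_of_cvg_maps.
- exact: cvg_maps_of_hausdorff_cvg.
Qed.
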